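(* There is an absolute constant $c>0$ such that for all integers $n\ge 1$ and $1\le d<n$, the function $\mathrm{HAM}^{(d)}_n$ has a realization with margin at least $c/d$; that is, $\gamma(\mathrm{HAM}^{(d)}_n)=\Omega(1/d)$.
   Context: $\mathrm{HAM}^{(d)}_n:\{0,1\}^n\times\{0,1\}^n\to\{0,1\}$ is defined by $\mathrm{HAM}^{(d)}_n(x,y)=1$ iff the Hamming distance between $x$ and $y$ is at most $d$. An assignment of real unit vectors $\alpha_x,\beta_y$ is a realization of a Boolean function $f$ with margin $\gamma>0$ if $\langle\alpha_x,\beta_y\rangle\ge\gamma$ whenever $f(x,y)=0$ and $\langle\alpha_x,\beta_y\rangle\le-\gamma$ whenever $f(x,y)=1$; $\gamma(f)$ denotes the supremum of margins over all realizations of $f$ in any dimension. *)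

From mathcomp Require Import all_boot all_order all_algebra.
From Stdlib Require Rdefinitions.
From mathcomp Require Import Rstruct.
Notation R := Rdefinitions.R.
Set Implicit Arguments. Unset Strict Implicit. Unset Printing Implicit Defensive.
Import Order.TTheory GRing.Theory Num.Theory.
Local Open Scope ring_scope.

Definition bitstr (n : nat) := {ffun 'I_n -> bool}.

Definition hamming (n : nat) (x y : bitstr n) : nat := #|[set i | x i != y i]|.

Definition HAM (n d : nat) (x y : bitstr n) : bool := (hamming x y <= d)%N.

Definition dotp (k : nat) (u v : 'rV[R]_k) : R := (u *m v^T) 0 0.

Definition realization_with_margin (A B : Type) (f : A -> B -> bool) (k : nat)
    (alpha : A -> 'rV[R]_k) (beta : B -> 'rV[R]_k) (gamma : R) : Prop :=
  0 < gamma /\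
  (forall x, dotp (alpha x) (alpha x) = 1) /\
  (forall y, dotp (beta y) (beta y) = 1) /\
  (forall x y, f x y = false -> gamma <= dotp (alpha x) (beta y)) /\
  (forall x y, f x y = true -> dotp (alpha x) (beta y) <= - gamma).

From mathcomp Require Import all_boot all_order all_algebra.
From Stdlib Require Rdefinitions.
From mathcomp Require Import Rstruct.
From mathcomp Require Import ring lra zify.
Import Order.TTheory GRing.Theory Num.Theory.
Local Open Scope ring_scope.
Set Implicit Arguments. Unset Strict Implicit.

(* Let agr(x, y) = n - dist(x, y) be the number of agreeing coordinates. The
   kernel (agr(x, y) / n)^k is an inner product of features indexed by pairs
   (u, b) of a k-tuple u of coordinates and a bit pattern b, the (u, b)-feature
   of x being 1 iff x restricted to u equals b. For k about n / 2d this kernel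
   drops by Omega(1/d) between agreement n - d and n - d - 1; placing a
   threshold halfway between these two values in an extra constant coordinate
   and renormalizing separates HAM^(d) with margin Omega(1/d). *)

Section NumericBounds.
Variable F : realFieldType.
Implicit Types a b A B P : F.

Lemma subrXX_ge a b j : 0 <= b -> b <= a ->
  j.+1%:R * (a - b) * b ^+ j <= a ^+ j.+1 - b ^+ j.+1.
Proof.
move=> b0 ba; elim: j => [|j IH]; first by rewrite expr0 !expr1 mul1r mulr1.
set X := a ^+ j.+1 - b ^+ j.+1 in IH.
have bj : 0 <= b ^+ j by apply: exprn_ge0.
have X0 : 0 <= X by apply: le_trans IH; rewrite !mulr_ge0 // subr_ge0.
have -> : a ^+ j.+2 - b ^+ j.+2 = a * X + (a - b) * b ^+ j.+1.
  by rewrite /X !exprS; ring.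
rewrite !exprS -(addn1 j.+1) natrD.
have h1 : b * (j.+1%:R * (a - b) * b ^+ j) <= b * X by apply: ler_wpM2l.
have h2 : b * X <= a * X by apply: ler_wpM2r.
nra.
Qed.

Lemma bernoulli_ineq b j : 0 <= b -> 1 - j%:R * (1 - b) <= b ^+ j.
Proof.
move=> b0; elim: j => [|j IH]; first by rewrite expr0 mul0r subr0.
rewrite exprS -addn1 natrD.
have h1 : b * (1 - j%:R * (1 - b)) <= b * b ^+ j by apply: ler_wpM2l.
have h2 : 0 <= j%:R * ((1 - b) * (1 - b)) :> F by rewrite mulr_ge0 ?ler0n // -expr2 sqr_ge0.
nra.
Qed.

Lemma ler_ratio_pow (m m' n k : nat) : (m <= m')%N ->
  (m%:R / n%:R) ^+ k <= (m'%:R / n%:R) ^+ k :> F.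
Proof.
move=> mm'; apply: lerXn2r; rewrite ?nnegrE ?divr_ge0 //.
by rewrite ler_wpM2r ?invr_ge0 // ler_nat.
Qed.

Definition kernel_degree (n d : nat) : nat := (n %/ (2 * d.+1)).+1.

(* With this degree k the kernel is still at least 1/2 at agreement
   n - d - 1, while its slope there is about k/n >= 1/2(d+1). *)
Lemma agreement_power_gap (n d : nat) : (1 <= d)%N -> (d < n)%N ->
  (8 * d%:R)^-1 <= ((n - d)%:R / n%:R) ^+ kernel_degree n d
                  - ((n - d.+1)%:R / n%:R) ^+ kernel_degree n d :> F.
Proof.
move=> d1 dn; rewrite /kernel_degree; set j := (n %/ (2 * d.+1))%N.
have jn : ((j * (2 * d.+1))%N)%:R <= n%:R :> F by rewrite ler_nat leq_divM.
have nj : n%:R <= ((j.+1 * (2 * d.+1))%N)%:R :> F.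
  by rewrite ler_nat ltnW // ltn_ceil.
set N := n%:R : F; set D := d%:R : F; set J := j%:R : F.
have eD : d.+1%:R = D + 1 by rewrite natr1.
rewrite !natrM eD -natr1 in jn nj.
rewrite !natrB ?(ltnW dn) // eD.
have D1 : 1 <= D by rewrite ler1n.
have DN : D + 1 <= N by rewrite -eD ler_nat.
have J0 : 0 <= J by apply: ler0n.
set r := N^-1.
have Nr : N * r = 1 by rewrite mulfV //; lra.
have r0 : 0 < r by rewrite invr_gt0; lra.
set b := (N - (D + 1)) / N.
have -> : (N - D) / N = b + r by rewrite /b /r; field; lra.
have b0 : 0 <= b by rewrite divr_ge0 //; lra.
have slope := @subrXX_ge (b + r) b j b0 (ler_wpDr (ltW r0) (lexx b)).
rewrite -natr1 -/J (_ : b + r - b = r) in slope; last by ring.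
have half : 1 / 2 <= b ^+ j.
  have := bernoulli_ineq j b0; rewrite (_ : 1 - b = (D + 1) * r); last first.
    by rewrite /b /r; field; lra.
  have := ler_wpM2r (ltW r0) jn; rewrite Nr; nra.
have kr : 1 <= 2 * (D + 1) * ((J + 1) * r).
  have := ler_wpM2r (ltW r0) nj; rewrite Nr; nra.
have gap_half : (J + 1) * r / 2 <= (b + r) ^+ j.+1 - b ^+ j.+1.
  have : (J + 1) * r * (1 / 2) <= (J + 1) * r * b ^+ j.
    by apply: ler_wpM2l => //; rewrite mulr_ge0 //; lra.
  nra.
rewrite -[(8 * D)^-1]mul1r ler_pdivrMr; last lra.
have q0 : 0 <= (J + 1) * r by rewrite mulr_ge0 //; lra.
nra.
Qed.

Lemma midpoint_margin_lo A B P : 0 <= B -> B <= A -> A <= 1 -> P <= B ->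
  (A - B) / 4 <= ((A + B) / 2 - P) / (1 + (A + B) / 2).
Proof.
move=> B0 BA A1 PB; have : 0 <= (A - B) * (1 - (A + B) / 2) by rewrite mulr_ge0; lra.
by rewrite ler_pdivlMr; lra.
Qed.

Lemma midpoint_margin_hi A B P : 0 <= B -> B <= A -> A <= 1 -> A <= P ->
  ((A + B) / 2 - P) / (1 + (A + B) / 2) <= - ((A - B) / 4).
Proof.
move=> B0 BA A1 AP; have : 0 <= (A - B) * (1 - (A + B) / 2) by rewrite mulr_ge0; lra.
by rewrite ler_pdivrMr; lra.
Qed.
End NumericBounds.

Definition vec (I : finType) (f : I -> R) : 'rV[R]_#|I| :=
  \row_(j < #|I|) f (enum_val j).

Lemma dotp_vec (I : finType) (f g : I -> R) :
  dotp (vec f) (vec g) = \sum_i f i * g i.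
Proof.
rewrite /dotp /vec !mxE (big_enum_val (fun i => f i * g i)).
by apply: eq_bigr => j _; rewrite !mxE.
Qed.

Section AgreementKernel.
Variables (n k : nat).
Implicit Types x y : bitstr n.

Definition agreement x y : nat := #|[set i | x i == y i]|.

Lemma agreement_add_hamming x y : (agreement x y + hamming x y)%N = n.
Proof.
rewrite /agreement /hamming -[RHS](card_ord n) -(cardC [set i | x i == y i]).
by congr (_ + _)%N; apply: eq_card => i; rewrite !inE.
Qed.

Lemma agreement_id x : agreement x x = n.
Proof. by rewrite /agreement -[RHS]card_ord; apply: eq_card => i; rewrite inE eqxx. Qed.

Definition restrict x (u : {ffun 'I_k -> 'I_n}) : {ffun 'I_k -> bool} :=
  [ffun i => x (u i)].

Lemma card_restrict_eq x y :
  #|[set u | restrict x u == restrict y u]| = (agreement x y ^ k)%N.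
Proof.
rewrite /agreement -[k in (_ ^ k)%N]card_ord -card_ffun_on.
apply: eq_card => u; rewrite inE; apply/eqP/ffun_onP => [xy i | xy].
  by have := congr1 (fun f : {ffun _ -> bool} => f i) xy; rewrite !ffunE inE => ->.
by apply/ffunP => i; rewrite !ffunE; have := xy i; rewrite inE => /eqP.
Qed.

Lemma sum_restrict_indicator x y :
  \sum_(p : {ffun 'I_k -> 'I_n} * {ffun 'I_k -> bool})
     ((restrict x p.1 == p.2)%:R * (restrict y p.1 == p.2)%:R : R)
  = (agreement x y ^ k)%N%:R.
Proof.
rewrite -(pair_bigA _ (fun u b => (restrict x u == b)%:R * (restrict y u == b)%:R)).
rewrite -card_restrict_eq -sum1_card natr_sum [RHS]big_mkcond /=.
apply: eq_bigr => u _; rewrite inE (bigD1 (restrict x u)) //= eqxx mul1r.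
rewrite big1 ?addr0 => [|b]; first by rewrite eq_sym; case: eqP.
by rewrite eq_sym => /negbTE ->; rewrite mul0r.
Qed.

Variable c : R.

Definition feature (s : R) x
    (i : unit + {ffun 'I_k -> 'I_n} * {ffun 'I_k -> bool}) : R :=
  if i is inr p then s * (restrict x p.1 == p.2)%:R else c.

Lemma dotp_feature s s' x y :
  dotp (vec (feature s x)) (vec (feature s' y))
  = c ^+ 2 + s * s' * (agreement x y ^ k)%N%:R.
Proof.
rewrite dotp_vec big_sumType (big_pred1 tt) => [/=|[]//].
rewrite -sum_restrict_indicator mulr_sumr.
by congr (_ + _); apply: eq_bigr => p _; ring.
Qed.

End AgreementKernel.

Section NormalizedKernel.
Variables (n k : nat) (t : R).

Let c := Num.sqrt (t / (1 + t)).
Let s := Num.sqrt ((1 + t) * n%:R ^+ k)^-1.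

Let sqr_c : 0 <= t -> c ^+ 2 = t / (1 + t).
Proof. by move=> t0; rewrite sqr_sqrtr // divr_ge0 //; lra. Qed.

Let sqr_s : (0 < n)%N -> 0 <= t -> s ^+ 2 = ((1 + t) * n%:R ^+ k)^-1.
Proof.
by move=> n0 t0; rewrite sqr_sqrtr // invr_ge0 mulr_ge0 ?exprn_ge0 //; lra.
Qed.

Definition kernel_feature (e : R) (x : bitstr n) := vec (@feature n k c (e * s) x).

Lemma dotp_kernel_feature_self (e : R) x : (0 < n)%N -> 0 <= t -> e ^+ 2 = 1 ->
  dotp (kernel_feature e x) (kernel_feature e x) = 1.
Proof.
move=> n0 t0 e2; rewrite dotp_feature agreement_id natrX.
rewrite (_ : e * s * (e * s) = e ^+ 2 * s ^+ 2); last by ring.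
rewrite e2 mul1r sqr_c // sqr_s //.
by field; rewrite !gt_eqF ?exprn_gt0 ?ltr0n //; lra.
Qed.

Lemma dotp_kernel_feature x y : (0 < n)%N -> 0 <= t ->
  dotp (kernel_feature 1 x) (kernel_feature (-1) y)
  = (t - ((agreement x y)%:R / n%:R) ^+ k) / (1 + t).
Proof.
move=> n0 t0; rewrite dotp_feature natrX expr_div_n.
rewrite (_ : 1 * s * (-1 * s) = - s ^+ 2); last by ring.
rewrite sqr_c // sqr_s //.
by field; rewrite !gt_eqF ?exprn_gt0 ?ltr0n //; lra.
Qed.

End NormalizedKernel.

Theorem mainTheorem7 :
  exists c : R, 0 < c /\
    forall n d : nat, (1 <= n)%N -> (1 <= d)%N -> (d < n)%N ->
      exists (k : nat) (alpha beta : bitstr n -> 'rV[R]_k),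
        realization_with_margin (@HAM n d) alpha beta (c / d%:R).
Proof.
exists (1 / 32); split; first lra.
move=> n d n1 d1 dn.
have gap := agreement_power_gap R d1 dn.
set k := kernel_degree n d in gap; set A := (_ ^+ k) in gap; set B := (_ ^+ k) in gap.
have B0 : 0 <= B by rewrite exprn_ge0 // divr_ge0.
have D1 : 1 <= d%:R :> R by rewrite ler1n.
have BA : B <= A by apply: ler_ratio_pow; lia.
have A1 : A <= 1.
  by rewrite exprn_ile1 ?divr_ge0 // ler_pdivrMr ?ltr0n // mul1r ler_nat leq_subr.
have margin : 1 / 32 / d%:R <= (A - B) / 4.
  rewrite (_ : 1 / 32 / d%:R = (8 * d%:R)^-1 / 4); last by field; lra.
  by rewrite ler_pM2r // invr_gt0.
have t0 : 0 <= (A + B) / 2 by lra.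
exists _, (kernel_feature k ((A + B) / 2) 1), (kernel_feature k ((A + B) / 2) (-1)).
split; [by rewrite divr_gt0 //; lra | split; [|split]].
- by move=> x; rewrite dotp_kernel_feature_self // expr1n.
- by move=> y; rewrite dotp_kernel_feature_self // sqrrN expr1n.
split => x y; rewrite /HAM dotp_kernel_feature // => H; have := agreement_add_hamming x y.
- move/negbT: H; rewrite -ltnNge => H e; apply: le_trans margin _.
  by apply: midpoint_margin_lo => //; apply: ler_ratio_pow; lia.
- move=> e; apply: le_trans (_ : _ <= - ((A - B) / 4)) _; last by rewrite lerN2.
  by apply: midpoint_margin_hi => //; apply: ler_ratio_pow; lia.
Qed.
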